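(* Let $\mathcal{C}$ be a $t$-periodic triangulated category over the finite field $k$ with $t>1$ odd. For all objects $Z,L,M$ of $\mathcal{C}$, $$\frac{|(M,L)_{Z[1]}|}{|\operatorname{Aut}L|}\cdot\Big(\prod_{i=1}^t\frac{|\operatorname{Hom}(M[i],L)|^{(-1)^i}}{|\operatorname{Hom}(L[i],L)|^{(-1)^i}}\Big)^{1/2}=\frac{|(Z,M)_{L}|}{|\operatorname{Aut}Z|}\cdot\Big(\prod_{i=1}^t\frac{|\operatorname{Hom}(Z[i],M)|^{(-1)^i}}{|\operatorname{Hom}(Z[i],Z)|^{(-1)^i}}\Big)^{1/2}.$$
   Context: $k$ is a finite field with $q$ elements. A $t$-periodic triangulated category is a $k$-additive triangulated category $\mathcal{C}$ with translation functor $T=[1]$ such that (1) $\operatorname{Hom}(X,Y)$ is a finite-dimensional $k$-vector space for all $X,Y$; (2) $\operatorname{End}X$ is a finite-dimensional local $k$-algebra for every indecomposable $X$; (3) $[1]^t=[t]\cong 1_{\mathcal{C}}$. For objects $X,Y,W$, $(X,Y)_W$ denotes the set of morphisms $f\in\operatorname{Hom}(X,Y)$ whose mapping cone $\operatorname{Cone}(f)$ is isomorphic to $W$. $|S|$ denotes the cardinality of a finite set $S$. *)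

From HB Require Import structures.
From mathcomp Require Import all_boot all_order all_algebra all_field.
From mathcomp Require Import boolp.

Set Implicit Arguments.
Unset Strict Implicit.
Unset Printing Implicit Defensive.

Import Order.TTheory GRing.Theory Num.Theory.
Local Open Scope ring_scope.

Record preTri (k : finFieldType) := PreTri {
  obj : Type;
  hom : obj -> obj -> vectType k;
  comp : forall X Y Z : obj, hom Y Z -> hom X Y -> hom X Z;  (* comp g f = g o f *)
  idm : forall X : obj, hom X X;
  shift : obj -> obj;
  shiftm : forall X Y : obj, hom X Y -> hom (shift X) (shift Y);
  dist : forall X Y Z : obj,
      hom X Y -> hom Y Z -> hom Z (shift X) -> Prop          (* distinguished triangles *)
}.

Arguments comp {k} _ {X Y Z} g f.
Arguments idm {k} _ X.
Arguments shift {k} _ X.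
Arguments shiftm {k} _ {X Y} f.
Arguments dist {k} _ {X Y Z} f g h.
Arguments hom {k} _ X Y.
Arguments obj {k} _.

Section TriDefs.
Variables (k : finFieldType) (C : preTri k).

Local Notation hom := (hom C).
Local Notation comp := (comp C).
Local Notation idm := (idm C).
Local Notation shift := (shift C).
Local Notation shiftm := (shiftm C).
Local Notation dist := (dist C).

Definition cat_axioms : Prop :=
  (forall X Y Z W (h : hom Z W) (g : hom Y Z) (f : hom X Y),
      comp h (comp g f) = comp (comp h g) f) /\
  (forall X Y (f : hom X Y), comp (idm Y) f = f) /\
  (forall X Y (f : hom X Y), comp f (idm X) = f) /\
  (forall X Y Z (a : k) (g1 g2 : hom Y Z) (f : hom X Y),
      comp (a *: g1 + g2) f = a *: comp g1 f + comp g2 f) /\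
  (forall X Y Z (a : k) (g : hom Y Z) (f1 f2 : hom X Y),
      comp g (a *: f1 + f2) = a *: comp g f1 + comp g f2).

Definition is_iso X Y (f : hom X Y) : Prop :=
  exists g : hom Y X, comp g f = idm X /\ comp f g = idm Y.

Definition iso_obj X Y : Prop := exists f : hom X Y, is_iso f.

Definition is_zero X : Prop := idm X = 0.

Definition is_biprod X A B (i1 : hom A X) (i2 : hom B X)
    (p1 : hom X A) (p2 : hom X B) : Prop :=
  [/\ comp p1 i1 = idm A, comp p2 i2 = idm B, comp p1 i2 = 0,
      comp p2 i1 = 0 & comp i1 p1 + comp i2 p2 = idm X].

Definition additive_axioms : Prop :=
  (exists Z, is_zero Z) /\
  (forall A B, exists X (i1 : hom A X) (i2 : hom B X) (p1 : hom X A) (p2 : hom X B),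
      is_biprod i1 i2 p1 p2).

Definition shift_axioms : Prop :=
  (forall X Y (a : k) (f g : hom X Y), shiftm (a *: f + g) = a *: shiftm f + shiftm g) /\
  (forall X Y Z (g : hom Y Z) (f : hom X Y), shiftm (comp g f) = comp (shiftm g) (shiftm f)) /\
  (forall X, shiftm (idm X) = idm (shift X)) /\
  (forall X Y, bijective (@Defs.shiftm k C X Y)) /\
  (forall Y, exists X, iso_obj (shift X) Y).

Definition TR1 : Prop :=
  (forall X Y Z X' Y' Z' (f : hom X Y) (g : hom Y Z) (h : hom Z (shift X))
      (f' : hom X' Y') (g' : hom Y' Z') (h' : hom Z' (shift X'))
      (u : hom X X') (v : hom Y Y') (w : hom Z Z'),
      is_iso u -> is_iso v -> is_iso w ->
      comp v f = comp f' u -> comp w g = comp g' v ->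
      comp (shiftm u) h = comp h' w ->
      dist f g h -> dist f' g' h') /\
  (forall X Z, is_zero Z -> dist (idm X) (0 : hom X Z) (0 : hom Z (shift X))) /\
  (forall X Y (f : hom X Y), exists Z (g : hom Y Z) (h : hom Z (shift X)), dist f g h).

Definition TR2 : Prop :=
  forall X Y Z (f : hom X Y) (g : hom Y Z) (h : hom Z (shift X)),
    dist f g h <-> dist g h (- shiftm f).

Definition TR3 : Prop :=
  forall X Y Z X' Y' Z' (f : hom X Y) (g : hom Y Z) (h : hom Z (shift X))
      (f' : hom X' Y') (g' : hom Y' Z') (h' : hom Z' (shift X'))
      (u : hom X X') (v : hom Y Y'),
    dist f g h -> dist f' g' h' -> comp v f = comp f' u ->
    exists w : hom Z Z', comp w g = comp g' v /\ comp (shiftm u) h = comp h' w.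

Definition TR4 : Prop :=
  forall X Y Z Z' X' Y' (f : hom X Y) (g : hom Y Z)
      (f2 : hom Y Z') (f3 : hom Z' (shift X))
      (g2 : hom Z X') (g3 : hom X' (shift Y))
      (h2 : hom Z Y') (h3 : hom Y' (shift X)),
    dist f f2 f3 -> dist g g2 g3 -> dist (comp g f) h2 h3 ->
    exists (u : hom Z' Y') (v : hom Y' X'),
      [/\ dist u v (comp (shiftm f2) g3),
          comp u f2 = comp h2 g, comp h3 u = f3,
          comp v h2 = g2 & comp g3 v = comp (shiftm f) h3].

Fixpoint shiftn (n : nat) (X : obj C) : obj C :=
  if n is n'.+1 then shift (shiftn n' X) else X.

Fixpoint shiftnm (n : nat) (X Y : obj C) (f : hom X Y) : hom (shiftn n X) (shiftn n Y) :=
  if n is n'.+1 then shiftm (shiftnm n' f) else f.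

Definition periodic (t : nat) : Prop :=
  exists eta : forall X, hom (shiftn t X) X,
    (forall X, is_iso (eta X)) /\
    (forall X Y (f : hom X Y), comp (eta Y) (shiftnm t f) = comp f (eta X)).

Definition indecomposable X : Prop :=
  ~ is_zero X /\
  forall A B (i1 : hom A X) (i2 : hom B X) (p1 : hom X A) (p2 : hom X B),
    is_biprod i1 i2 p1 p2 -> is_zero A \/ is_zero B.

Definition local_End X : Prop :=
  idm X <> 0 /\ forall a : hom X X, is_iso a \/ is_iso (idm X - a).

Definition periodic_tricat (t : nat) : Prop :=
  [/\ cat_axioms /\ additive_axioms, shift_axioms, TR1 /\ TR2,
      TR3 /\ TR4 & (forall X, indecomposable X -> local_End X) /\ periodic t].

Definition card_hom X Y : nat := #|{: finvect_type (hom X Y)}|.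

(* (X,Y)_W : morphisms f : X -> Y with Cone(f) isomorphic to W, i.e. fitting
   in a distinguished triangle X -f-> Y -> W -> X[1] *)
Definition cone_set X Y W : {set finvect_type (hom X Y)} :=
  [set f : finvect_type (hom X Y) |
     `[< exists (g : hom Y W) (h : hom W (shift X)), dist f g h >] ].

Definition aut_set X : {set finvect_type (hom X X)} :=
  [set f : finvect_type (hom X X) | `[< is_iso f >] ].

End TriDefs.

From Pilot Require Import Defs.
From HB Require Import structures.
From mathcomp Require Import all_boot all_order all_algebra all_field.
From mathcomp Require Import boolp.
From mathcomp Require Import ring.
Import Order.TTheory GRing.Theory Num.Theory.
Local Open Scope ring_scope.

(* Fix a triangle Z -f-> M -g-> L -h-> Z[1].  The automorphisms of L act on the
   completions (g, h) of f transitively (TR3 and the five lemma), with stabiliser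
   1 + {u | u g = 0 = h u}, so |(Z,M)_L| |Aut L| is the sum over all triangles of
   the sizes of these annihilators; rotating the triangles, |(M,L)_{Z[1]}| |Aut Z|
   is the same sum for the annihilators of (h, -f[1]).  Both annihilators are
   images of {u : Z[1] -> L | h u h = 0}, under u |-> u h and u |-> h u, with the
   kernels of Hom(h, L) and Hom(Z[1], h), so their ratio is the ratio of the images
   of these two maps.  Splitting every |Hom| along the long exact Hom-sequences of
   the rotated triangles, the alternating products telescope, because t is odd and
   C is t-periodic, to a common factor times the squares of the same two images. *)

Set Implicit Arguments.
Unset Strict Implicit.
Unset Printing Implicit Defensive.

Local Notation alt i := ((-1) ^+ i : int).

Lemma card_in_bij (T1 T2 : finType) (A : {set T1}) (B : {set T2})
    (f : T1 -> T2) (g : T2 -> T1) :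
  {in A, forall x, f x \in B} -> {in B, forall y, g y \in A} ->
  {in A, cancel f g} -> {in B, cancel g f} -> #|A| = #|B|.
Proof.
move=> fAB gBA fK gK; have <- : [set f x | x in A] = B.
  apply/setP => y; apply/imsetP/idP => [[x xA ->]|yB]; first exact: fAB.
  by exists (g y); rewrite ?gK ?gBA.
by rewrite card_in_imset // => x y xA yA /(congr1 g); rewrite !fK.
Qed.

Lemma card_kernel_image (U V : finZmodType) (phi : U -> V) (A : {set U}) :
  (forall x y, phi (x - y) = phi x - phi y) ->
  0 \in A -> (forall x y, x \in A -> y \in A -> x - y \in A) ->
  #|A| = muln #|[set x in A | phi x == 0]| #|[set phi x | x in A]|.
Proof.
move=> phiB A0 AB.
have phi0 : phi 0 = 0 by rewrite -(subrr 0) phiB subrr.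
have phiN x : phi (- x) = - phi x by rewrite -sub0r phiB phi0 sub0r.
rewrite -sum1_card (partition_big phi (mem [set phi x | x in A])) /=; last first.
  by move=> x xA; apply: imset_f.
rewrite mulnC -sum_nat_const; apply: eq_bigr => _ /imsetP [x0 x0A ->].
have Nx0 : - x0 \in A by rewrite -sub0r AB.
transitivity #|[set x in A | phi x == phi x0]|.
  by rewrite -sum1_card; apply: eq_bigl => x; rewrite inE.
apply: (@card_in_bij _ _ _ _ (fun x => x - x0) (fun x => x + x0)).
- by move=> x; rewrite !inE => /andP [xA /eqP E]; rewrite AB //= phiB E subrr eqxx.
- move=> x; rewrite !inE => /andP [xA /eqP E].
  have -> : x + x0 = x - - x0 by rewrite opprK.
  by rewrite AB //= phiB phiN E opprK add0r eqxx.
- by move=> x _; rewrite /= subrK.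
- by move=> x _; rewrite /= addrK.
Qed.

Section AlternatingProducts.
Variable R : fieldType.

Lemma alt_prod_telescope (c : nat -> R) (n : nat) : (forall i, c i != 0) ->
  \prod_(1 <= i < n.+1) (c i.-1 * c i) ^ alt i = (c 0)^-1 * c n ^ alt n.
Proof.
move=> c_neq0; elim: n => [|n IHn]; first by rewrite big_geq // expr0 expr1z mulVf.
rewrite big_nat_recr //= IHn expfzMl exprS mulN1r -invr_expz.
by rewrite mulrA mulrK // unitfE expfz_neq0.
Qed.

Lemma alt_prod_exact (t : nat) (a b c : nat -> R) : odd t -> (forall i, c i != 0) ->
  \prod_(1 <= i < t.+1) (a i * b i) ^ alt i =
  \prod_(1 <= i < t.+1) (b i * c i) ^ alt i *
  \prod_(1 <= i < t.+1) (c i.-1 * a i) ^ alt i * (c 0 * c t).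
Proof.
move=> t_odd c_neq0; rewrite -big_split /=.
under [X in _ = X * _]eq_bigr => i _.
  rewrite -expfzMl [_ * _](_ : _ = (a i * b i) * (c i.-1 * c i)); last by ring.
  rewrite expfzMl; over.
rewrite big_split /= alt_prod_telescope // -signr_odd t_odd expr1 exprN1 -mulrA.
by rewrite [X in _ = _ * X]mulrACA !mulVf // !mulr1.
Qed.

Lemma alt_prod_rev (t : nat) (F : nat -> R) : odd t ->
  \prod_(1 <= i < t.+1) F (t.+1 - i)%N ^ alt i = \prod_(1 <= i < t.+1) F i ^ alt i.
Proof.
move=> t_odd; rewrite big_nat_rev /=; apply: eq_big_nat => i /andP [i_gt0 i_le].
rewrite add1n subSS subKn 1?ltnW // -signr_odd -[in RHS]signr_odd.
by rewrite oddB 1?ltnW //= t_odd /=; case: (odd i).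
Qed.

End AlternatingProducts.

Section Triangulated.
Variables (k : finFieldType) (C : preTri k).
Local Notation hom := (@Defs.hom k C).
Local Notation homT X Y := (finvect_type (@Defs.hom k C X Y)).
Local Notation cmp := (@Defs.comp k C _ _ _).
Local Notation idm := (@Defs.idm k C).
Local Notation sh := (@Defs.shift k C).
Local Notation shm := (@Defs.shiftm k C _ _).
Local Notation dist := (@Defs.dist k C _ _ _).

Hypothesis Hcat : cat_axioms C.
Hypothesis Hadd : additive_axioms C.
Hypothesis Hshift : shift_axioms C.
Hypothesis HTR1 : TR1 C.
Hypothesis HTR2 : TR2 C.
Hypothesis HTR3 : TR3 C.

Lemma cmpA X Y Z W (h : hom Z W) (g : hom Y Z) (f : hom X Y) :
  cmp h (cmp g f) = cmp (cmp h g) f.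
Proof. by case: Hcat => ->. Qed.

Lemma cmp1l X Y (f : hom X Y) : cmp (idm Y) f = f.
Proof. by case: Hcat => _ []. Qed.

Lemma cmp1r X Y (f : hom X Y) : cmp f (idm X) = f.
Proof. by case: Hcat => _ [_ []]. Qed.

Lemma cmpDl X Y Z (g1 g2 : hom Y Z) (f : hom X Y) :
  cmp (g1 + g2) f = cmp g1 f + cmp g2 f.
Proof. by case: Hcat => _ [_ [_ [H _]]]; have := H X Y Z 1 g1 g2 f; rewrite !scale1r. Qed.

Lemma cmpDr X Y Z (g : hom Y Z) (f1 f2 : hom X Y) :
  cmp g (f1 + f2) = cmp g f1 + cmp g f2.
Proof. by case: Hcat => _ [_ [_ [_ H]]]; have := H X Y Z 1 g f1 f2; rewrite !scale1r. Qed.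

Lemma cmp0l X Y Z (f : hom X Y) : cmp (0 : hom Y Z) f = 0.
Proof. by apply/(addrI (cmp 0 f)); rewrite -cmpDl !addr0. Qed.

Lemma cmp0r X Y Z (g : hom Y Z) : cmp g (0 : hom X Y) = 0.
Proof. by apply/(addrI (cmp g 0)); rewrite -cmpDr !addr0. Qed.

Lemma cmpNl X Y Z (g : hom Y Z) (f : hom X Y) : cmp (- g) f = - cmp g f.
Proof. by apply/(addrI (cmp g f)); rewrite -cmpDl !subrr cmp0l. Qed.

Lemma cmpNr X Y Z (g : hom Y Z) (f : hom X Y) : cmp g (- f) = - cmp g f.
Proof. by apply/(addrI (cmp g f)); rewrite -cmpDr !subrr cmp0r. Qed.

Lemma cmpBl X Y Z (g1 g2 : hom Y Z) (f : hom X Y) :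
  cmp (g1 - g2) f = cmp g1 f - cmp g2 f.
Proof. by rewrite cmpDl cmpNl. Qed.

Lemma cmpBr X Y Z (g : hom Y Z) (f1 f2 : hom X Y) :
  cmp g (f1 - f2) = cmp g f1 - cmp g f2.
Proof. by rewrite cmpDr cmpNr. Qed.

Lemma shiftm_comp X Y Z (g : hom Y Z) (f : hom X Y) :
  shm (cmp g f) = cmp (shm g) (shm f).
Proof. by case: Hshift => _ []. Qed.

Lemma shiftm_id X : shm (idm X) = idm (sh X).
Proof. by case: Hshift => _ [_ []]. Qed.

Lemma shiftm_bij X Y : bijective (@Defs.shiftm k C X Y).
Proof. by case: Hshift => _ [_ [_ []]]. Qed.

Lemma shiftm_inj X Y : injective (@Defs.shiftm k C X Y).
Proof. exact/bij_inj/shiftm_bij. Qed.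

Lemma shiftm_surj X Y (g : hom (sh X) (sh Y)) : exists f, g = shm f.
Proof. by have [s _ sK] := shiftm_bij X Y; exists (s g); rewrite sK. Qed.

Lemma shiftmZ X Y a (f : hom X Y) : shm (a *: f) = a *: shm f.
Proof.
case: Hshift => shmDZ _.
have shm0 : shm (0 : hom X Y) = 0.
  apply: (addIr (shm (0 : hom X Y))); rewrite add0r.
  by have := shmDZ X Y 1 0 0; rewrite !scale1r addr0 => /esym.
by have := shmDZ X Y a f 0; rewrite !addr0 shm0 addr0.
Qed.

Lemma shiftmN X Y (f : hom X Y) : shm (- f) = - shm f.
Proof. by rewrite -scaleN1r shiftmZ scaleN1r. Qed.

Lemma iso_id X : is_iso (idm X).
Proof. by exists (idm X); rewrite cmp1l. Qed.

Lemma iso_comp X Y Z (g : hom Y Z) (f : hom X Y) :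
  is_iso g -> is_iso f -> is_iso (cmp g f).
Proof.
move=> [g' [gK Kg]] [f' [fK Kf]]; exists (cmp f' g'); split.
  by rewrite cmpA -(cmpA f') gK cmp1r.
by rewrite cmpA -(cmpA g) Kf cmp1r.
Qed.

Lemma iso_opp X Y (f : hom X Y) : is_iso f -> is_iso (- f).
Proof. by move=> [f' [fK Kf]]; exists (- f'); rewrite cmpNl cmpNr opprK fK cmpNl cmpNr opprK. Qed.

Lemma iso_shiftm X Y (f : hom X Y) : is_iso f -> is_iso (shm f).
Proof. by move=> [f' [fK Kf]]; exists (shm f'); rewrite -!shiftm_comp fK Kf !shiftm_id. Qed.

Lemma dist_rot X Y Z (f : hom X Y) (g : hom Y Z) (h : hom Z (sh X)) :
  dist f g h -> dist g h (- shm f).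
Proof. exact: (HTR2 f g h).1. Qed.

Lemma dist_unrot X Y Z (f : hom X Y) (g : hom Y Z) (h : hom Z (sh X)) :
  dist g h (- shm f) -> dist f g h.
Proof. exact: (HTR2 f g h).2. Qed.

Lemma dist_iso X Y Z X' Y' Z' (f : hom X Y) (g : hom Y Z) (h : hom Z (sh X))
    (f' : hom X' Y') (g' : hom Y' Z') (h' : hom Z' (sh X'))
    (u : hom X X') (v : hom Y Y') (w : hom Z Z') :
  is_iso u -> is_iso v -> is_iso w ->
  cmp v f = cmp f' u -> cmp w g = cmp g' v -> cmp (shm u) h = cmp h' w ->
  dist f g h -> dist f' g' h'.
Proof. by case: HTR1 => H _; apply: H. Qed.

Lemma dist_trivial (X O : obj C) :
  is_zero O -> dist (idm X) (0 : hom X O) (0 : hom O (sh X)).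
Proof. by case: HTR1 => _ [H _]; apply: H. Qed.

Lemma dist_comp_gf X Y Z (f : hom X Y) (g : hom Y Z) (h : hom Z (sh X)) :
  dist f g h -> cmp g f = 0.
Proof.
have [[O zO] _] := Hadd; move=> Dfgh.
have [w [<- _]] := HTR3 (dist_trivial X zO) Dfgh (erefl (cmp f (idm X))).
by rewrite cmp0r.
Qed.

Lemma dist_comp_hg X Y Z (f : hom X Y) (g : hom Y Z) (h : hom Z (sh X)) :
  dist f g h -> cmp h g = 0.
Proof. by move/dist_rot/dist_comp_gf. Qed.

Lemma dist_comp_fh X Y Z (f : hom X Y) (g : hom Y Z) (h : hom Z (sh X)) :
  dist f g h -> cmp (shm f) h = 0.
Proof. by move/dist_rot/dist_comp_hg/eqP; rewrite cmpNl oppr_eq0 => /eqP. Qed.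

Lemma dist_lift X Y Z (f : hom X Y) (g : hom Y Z) (h : hom Z (sh X)) W (a : hom W Y) :
  dist f g h -> cmp g a = 0 -> exists b, a = cmp f b.
Proof.
move=> Dfgh ga0; have [[O zO] _] := Hadd.
have E : cmp (0 : hom O Z) (0 : hom W O) = cmp g a by rewrite cmp0l ga0.
have [w [_ Ew]] := HTR3 (dist_rot (dist_trivial W zO)) (dist_rot Dfgh) E.
have [b wb] := shiftm_surj w; exists b; apply: shiftm_inj.
move: Ew; rewrite wb cmpNr cmpNl shiftm_id cmp1r shiftm_comp.
by move/eqP; rewrite eqr_opp => /eqP.
Qed.

Lemma dist_desc X Y Z (f : hom X Y) (g : hom Y Z) (h : hom Z (sh X)) W (a : hom Y W) :
  dist f g h -> cmp a f = 0 -> exists b, a = cmp b g.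
Proof.
move=> Dfgh af0; have [[O zO] _] := Hadd.
have [V [phi [psi [psiK phiK]]]] : exists V, iso_obj (sh V) W.
  by case: Hshift => _ [_ [_ []]].
have E : cmp (cmp psi a) f = cmp (0 : hom O (sh V)) (0 : hom X O).
  by rewrite -cmpA af0 !cmp0r.
have [w [Ew _]] := HTR3 Dfgh (dist_rot (dist_rot (dist_trivial V zO))) E.
exists (- cmp phi w).
by rewrite cmpNl -cmpA Ew cmpNl shiftm_id cmp1l cmpNr opprK cmpA phiK cmp1l.
Qed.

(* The five lemma, for two triangles on the same morphism [a]. *)
Lemma dist_cone_iso A B D (a : hom A B) (g g' : hom B D) (h h' : hom D (sh A))
    (w : hom D D) :
  dist a g h -> dist a g' h' -> cmp w g = g' -> h = cmp h' w -> is_iso w.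
Proof.
move=> Dagh Dag'h' wg hw.
have wK : injective (fun x : homT D D => cmp w x).
  move=> x y /eqP; rewrite -subr_eq0 -cmpBr => /eqP wxy0; apply/eqP; rewrite -subr_eq0.
  have hxy0 : cmp h (x - y) = 0 by rewrite hw -cmpA wxy0 cmp0r.
  have [b Eb] := dist_lift (dist_rot Dagh) hxy0.
  have g'b0 : cmp g' b = 0 by rewrite -wg -cmpA -Eb.
  have [c Ec] := dist_lift Dag'h' g'b0.
  by rewrite Eb Ec cmpA (dist_comp_gf Dagh) cmp0l.
have Kw : injective (fun x : homT D D => cmp x w).
  move=> x y /eqP; rewrite -subr_eq0 -cmpBl => /eqP xyw0; apply/eqP; rewrite -subr_eq0.
  have xyg'0 : cmp (x - y) g' = 0 by rewrite -wg cmpA xyw0 cmp0l.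
  have [b Eb] := dist_desc (dist_rot Dag'h') xyg'0.
  have bh0 : cmp b h = 0 by rewrite hw cmpA -Eb.
  have [c Ec] := dist_desc (dist_rot (dist_rot Dagh)) bh0.
  by rewrite Eb Ec -cmpA (dist_comp_hg (dist_rot Dag'h')) cmp0r.
have [wl _ wlK] := injF_bij wK; have [wr _ wrK] := injF_bij Kw.
have wwl : cmp w (wl (idm D)) = idm D by exact: (wlK (idm D)).
have wrw : cmp (wr (idm D)) w = idm D by exact: (wrK (idm D)).
exists (wl (idm D)); split => //.
suff <- : wr (idm D) = wl (idm D) by [].
transitivity (cmp (wr (idm D)) (cmp w (wl (idm D)))); first by rewrite wwl cmp1r.
by rewrite cmpA wrw cmp1l.
Qed.

Definition annihilator B D E (g : hom B D) (h : hom D E) : {set homT D D} :=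
  [set u : homT D D | (cmp u g == 0) && (cmp h u == 0)].

(* The automorphisms [w] of [D] carrying [(g0, h0)] to [(g, h)] under the
   action [(g, h) |-> (w g, h w^-1)]. *)
Definition transporter B D E (g0 g : hom B D) (h0 h : hom D E) : {set homT D D} :=
  [set w in aut_set D | (cmp w g0 == g) && (cmp h w == h0)].

(* If [u g = 0 = h u] then [u] factors through [h], so [u ^ 2 = 0] and [1 + u]
   is invertible with inverse [1 - u]. *)
Lemma card_stabiliser A B D (a : hom A B) (g : hom B D) (h : hom D (sh A)) :
  dist a g h -> #|transporter g g h h| = #|annihilator g h|.
Proof.
move=> Dagh.
apply: (@card_in_bij _ _ _ _ (fun v : homT D D => v - idm D) (fun u => u + idm D)).
- move=> v; rewrite !inE => /andP [_ /andP [/eqP vg /eqP hv]].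
  by rewrite cmpBl cmpBr vg hv cmp1l cmp1r !subrr !eqxx.
- move=> u; rewrite !inE => /andP [/eqP ug0 /eqP hu0].
  have [b ub] := dist_desc (dist_rot Dagh) ug0.
  have uu0 : cmp u u = 0 by rewrite {1}ub -cmpA hu0 cmp0r.
  rewrite cmpDl cmpDr ug0 hu0 cmp1l cmp1r !add0r !eqxx !andbT; apply/asboolP.
  exists (idm D - u); split.
    by rewrite cmpBl !cmpDr uu0 !cmp1l !cmp1r add0r addrC addKr.
  by rewrite cmpDl !cmpBr uu0 !cmp1l !cmp1r subr0 addrC subrK.
- by move=> v _; rewrite subrK.
- by move=> u _; rewrite addrK.
Qed.

Lemma card_transporter A B D (a : hom A B) (g0 g : hom B D) (h0 h : hom D (sh A)) :
  dist a g0 h0 -> dist a g h -> #|transporter g0 g h0 h| = #|transporter g g h h|.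
Proof.
move=> Dag0h0 Dagh.
have [w0 [w0g0 h0w0]] := HTR3 Dag0h0 Dagh (etrans (cmp1l a) (esym (cmp1r a))).
rewrite cmp1r in w0g0; rewrite shiftm_id cmp1l in h0w0.
have [w1 [w1w0 w0w1]] := dist_cone_iso Dag0h0 Dagh w0g0 h0w0.
have w1g : cmp w1 g = g0 by rewrite -w0g0 cmpA w1w0 cmp1l.
have h0w1 : cmp h0 w1 = h by rewrite h0w0 -cmpA w0w1 cmp1r.
apply: (@card_in_bij _ _ _ _ (fun w : homT D D => cmp w w1 : homT D D)
                              (fun v => cmp v w0 : homT D D)).
- move=> w; rewrite !inE => /andP [/asboolP iso_w /andP [/eqP wg0 /eqP hw]].
  rewrite -cmpA w1g wg0 cmpA hw h0w1 !eqxx !andbT.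
  by apply/asboolP/iso_comp => //; exists w0.
- move=> v; rewrite !inE => /andP [/asboolP iso_v /andP [/eqP vg /eqP hv]].
  rewrite -cmpA w0g0 vg cmpA hv -h0w0 !eqxx !andbT.
  by apply/asboolP/iso_comp => //; exists w1.
- by move=> w _; rewrite -cmpA w1w0 cmp1r.
- by move=> v _; rewrite -cmpA w0w1 cmp1r.
Qed.

Lemma sum_annihilator_cone A B D (a : hom A B) (g0 : hom B D) (h0 : hom D (sh A)) :
  dist a g0 h0 ->
  \sum_(p : (homT B D * homT D (sh A))%type | `[< dist a p.1 p.2 >])
    #|annihilator p.1 p.2| = #|aut_set D|.
Proof.
move=> Dag0h0.
transitivity (\sum_(p : (homT B D * homT D (sh A))%type | `[< dist a p.1 p.2 >])
                \sum_(w in transporter g0 p.1 h0 p.2) 1%N).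
  apply: eq_bigr => p /asboolP Dp.
  by rewrite sum1_card (card_transporter Dag0h0 Dp) (card_stabiliser Dp).
rewrite (exchange_big_dep (mem (aut_set D))) => [|p w _]; last by rewrite inE => /andP[].
rewrite /= -sum1_card; apply: eq_bigr => w autw.
have [w' [w'w ww']] : is_iso w by move: autw; rewrite inE => /asboolP.
rewrite (big_pred1 ((cmp w g0 : homT B D), (cmp h0 w' : homT D (sh A)))) // => -[g h] /=.
rewrite inE autw /=; apply/idP/eqP => [/andP [_ /andP [/eqP <- /eqP <-]]|[-> ->]].
  by rewrite -cmpA ww' cmp1r.
rewrite -cmpA w'w cmp1r !eqxx !andbT; apply/asboolP.
apply: (dist_iso (iso_id A) (iso_id B) (ex_intro _ w' (conj w'w ww')) _ _ _ Dag0h0).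
- by rewrite cmp1l cmp1r.
- by rewrite cmp1r.
- by rewrite shiftm_id cmp1l -cmpA w'w cmp1r.
Qed.

Lemma sum_annihilator_dist A B D :
  \sum_(x : (homT A B * (homT B D * homT D (sh A)))%type | `[< dist x.1 x.2.1 x.2.2 >])
    #|annihilator x.2.1 x.2.2| = muln #|cone_set A B D| #|aut_set D|.
Proof.
transitivity (\sum_(a : homT A B)
  \sum_(p : (homT B D * homT D (sh A))%type | `[< dist a p.1 p.2 >]) #|annihilator p.1 p.2|).
  by rewrite pair_big_dep.
rewrite -sum_nat_const [in RHS]big_mkcond /=; apply: eq_bigr => a _.
rewrite inE; case: asboolP => [[g0 [h0 /sum_annihilator_cone //]]|no_cone].
by rewrite big_pred0 // => p; apply/asboolP => Dp; apply: no_cone; exists p.1, p.2.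
Qed.

Lemma sum_annihilator_dist_rot X Y Z :
  \sum_(x : (homT X Y * (homT Y Z * homT Z (sh X)))%type | `[< dist x.1 x.2.1 x.2.2 >])
    #|annihilator x.2.2 (- shm x.1)| = muln #|cone_set Y Z (sh X)| #|aut_set (sh X)|.
Proof.
rewrite -sum_annihilator_dist; have [s sK Ks] := shiftm_bij X Y.
pose rot (x : (homT X Y * (homT Y Z * homT Z (sh X)))%type) :=
  ((x.2.1 : homT Y Z), ((x.2.2 : homT Z (sh X)), (- shm x.1 : homT (sh X) (sh Y)))).
have rot_bij : bijective rot.
  exists (fun y => ((s (- y.2.2) : homT X Y), (y.1, y.2.1))) => [[f [g h]]|[g [h e]]] /=.
    by rewrite opprK sK.
  by rewrite /rot /= Ks opprK.
rewrite (reindex rot (onW_bij _ rot_bij)) /=; apply: eq_bigl => x.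
by apply/asboolP/asboolP => [/dist_rot|/dist_unrot].
Qed.

Lemma card_aut_shift X : #|aut_set (sh X)| = #|aut_set X|.
Proof.
have [s sK Ks] := shiftm_bij X X.
apply: (@card_in_bij _ _ _ _ (fun y : homT (sh X) (sh X) => s y : homT X X)
                              (fun x : homT X X => shm x : homT (sh X) (sh X))).
- move=> y; rewrite !inE => /asboolP [y' [y'y yy']]; apply/asboolP.
  by exists (s y'); split; apply: shiftm_inj; rewrite shiftm_comp !Ks shiftm_id.
- by move=> x; rewrite !inE => /asboolP iso_x; apply/asboolP/iso_shiftm.
- by move=> y _; rewrite Ks.
- by move=> x _; rewrite sK.
Qed.

Definition im_precomp W X Y (x : hom X Y) : {set homT X W} :=
  [set (cmp u x : homT X W) | u : homT Y W].

Definition im_postcomp W X Y (x : hom X Y) : {set homT W Y} :=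
  [set (cmp x u : homT W Y) | u : homT W X].

Lemma card_hom_gt0 (X Y : obj C) : (0 < card_hom X Y)%N.
Proof. by apply/card_gt0P; exists 0. Qed.

Lemma im_precomp_gt0 W X Y (x : hom X Y) : (0 < #|im_precomp W x|)%N.
Proof. by apply/card_gt0P; exists 0; apply/imsetP; exists 0; rewrite ?cmp0l. Qed.

Lemma im_postcomp_gt0 W X Y (x : hom X Y) : (0 < #|im_postcomp W x|)%N.
Proof. by apply/card_gt0P; exists 0; apply/imsetP; exists 0; rewrite ?cmp0r. Qed.

Lemma card_hom_precomp W X Y (x : hom X Y) :
  card_hom Y W = muln #|[set u : homT Y W | cmp u x == 0]| #|im_precomp W x|.
Proof.
rewrite /card_hom -cardsT (@card_kernel_image _ _ (fun u : homT Y W => cmp u x : homT X W)).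
- congr muln.
    by apply: eq_card => u; rewrite !inE.
  by apply: eq_card => v; apply/imsetP/imsetP => -[u _ ->]; exists u.
- by move=> u v; rewrite cmpBl.
- by rewrite inE.
- by move=> *; rewrite inE.
Qed.

Lemma card_hom_postcomp W X Y (x : hom X Y) :
  card_hom W X = muln #|[set u : homT W X | cmp x u == 0]| #|im_postcomp W x|.
Proof.
rewrite /card_hom -cardsT (@card_kernel_image _ _ (fun u : homT W X => cmp x u : homT W Y)).
- congr muln.
    by apply: eq_card => u; rewrite !inE.
  by apply: eq_card => v; apply/imsetP/imsetP => -[u _ ->]; exists u.
- by move=> u v; rewrite cmpBr.
- by rewrite inE.
- by move=> *; rewrite inE.
Qed.

Lemma card_hom_dist_precomp W X Y Z (f : hom X Y) (g : hom Y Z) (h : hom Z (sh X)) :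
  dist f g h -> card_hom Y W = muln #|im_precomp W g| #|im_precomp W f|.
Proof.
move=> Dfgh; rewrite (card_hom_precomp W f); congr muln; apply: eq_card => u.
rewrite inE; apply/eqP/imsetP => [/(dist_desc Dfgh) [v ->]|[v _ ->]]; first by exists v.
by rewrite -cmpA (dist_comp_gf Dfgh) cmp0r.
Qed.

Lemma card_hom_dist_postcomp W X Y Z (f : hom X Y) (g : hom Y Z) (h : hom Z (sh X)) :
  dist f g h -> card_hom W Y = muln #|im_postcomp W f| #|im_postcomp W g|.
Proof.
move=> Dfgh; rewrite (card_hom_postcomp W g); congr muln; apply: eq_card => u.
rewrite inE; apply/eqP/imsetP => [/(dist_lift Dfgh) [v ->]|[v _ ->]]; first by exists v.
by rewrite cmpA (dist_comp_gf Dfgh) cmp0l.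
Qed.

Definition sandwich X Y (h : hom Y X) : {set homT X Y} :=
  [set u : homT X Y | cmp h (cmp u h) == 0].

(* [u |-> u h] maps [sandwich h] onto [annihilator g h], with the same kernel
   as on all of [Hom(Z[1], L)]. *)
Lemma card_annihilator_precomp Z M L (f : hom Z M) (g : hom M L) (h : hom L (sh Z)) :
  dist f g h ->
  muln #|annihilator g h| (card_hom (sh Z) L) = muln #|sandwich h| #|im_precomp L h|.
Proof.
move=> Dfgh; rewrite (card_hom_precomp L h).
rewrite (@card_kernel_image _ _ (fun u : homT (sh Z) L => cmp u h : homT L L) (sandwich h)).
- have -> : [set u : homT (sh Z) L in sandwich h | (cmp u h : homT L L) == 0] =
            [set u : homT (sh Z) L | cmp u h == 0].
    apply/setP => u; rewrite !inE; case: (cmp u h =P 0) => [->|]; last by rewrite andbF.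
    by rewrite cmp0r eqxx.
  have -> : [set (cmp u h : homT L L) | u : homT (sh Z) L in sandwich h] =
            annihilator g h.
    apply/setP => v; rewrite !inE; apply/imsetP/andP => [[u]|[/eqP vg0 /eqP hv0]].
      rewrite inE => /eqP huh0 ->.
      by rewrite -cmpA (dist_comp_hg Dfgh) cmp0r huh0 eqxx.
    have [u vu] := dist_desc (dist_rot Dfgh) vg0.
    by exists u; rewrite // inE -vu hv0.
  by rewrite mulnCA mulnA.
- by move=> u v; rewrite cmpBl.
- by rewrite inE cmp0l cmp0r.
- by move=> u v; rewrite !inE => /eqP hu /eqP hv; rewrite cmpBl cmpBr hu hv subrr.
Qed.

(* Symmetrically, [u |-> h u] maps [sandwich h] onto [annihilator h (- f[1])]. *)
Lemma card_annihilator_postcomp Z M L (f : hom Z M) (g : hom M L) (h : hom L (sh Z)) :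
  dist f g h ->
  muln #|annihilator h (- shm f)| (card_hom (sh Z) L) =
  muln #|sandwich h| #|im_postcomp (sh Z) h|.
Proof.
move=> Dfgh; rewrite (card_hom_postcomp (sh Z) h).
rewrite (@card_kernel_image _ _ (fun u : homT (sh Z) L => cmp h u : homT (sh Z) (sh Z))
                            (sandwich h)).
- have -> : [set u : homT (sh Z) L in sandwich h | (cmp h u : homT (sh Z) (sh Z)) == 0] =
            [set u : homT (sh Z) L | cmp h u == 0].
    apply/setP => u; rewrite !inE; case: (cmp h u =P 0) => [hu0|]; last by rewrite andbF.
    by rewrite cmpA hu0 cmp0l eqxx.
  have -> : [set (cmp h u : homT (sh Z) (sh Z)) | u : homT (sh Z) L in sandwich h] =
            annihilator h (- shm f).
    apply/setP => v; rewrite !inE; apply/imsetP/andP => [[u]|[/eqP vh0 /eqP fv0]].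
      rewrite inE => /eqP huh0 ->.
      by rewrite -cmpA huh0 cmpA cmpNl (dist_comp_fh Dfgh) oppr0 cmp0l eqxx.
    have [u vu] := dist_lift (dist_rot (dist_rot Dfgh)) fv0.
    by exists u; rewrite // inE cmpA -vu vh0.
  by rewrite mulnCA mulnA.
- by move=> u v; rewrite cmpBr.
- by rewrite inE cmp0l cmp0r.
- by move=> u v; rewrite !inE => /eqP hu /eqP hv; rewrite cmpBl cmpBr hu hv subrr.
Qed.

Lemma card_im_precomp_iso W A B A' B' (x : hom A B) (x' : hom A' B')
    (p : hom A' A) (q : hom B' B) :
  is_iso p -> is_iso q -> cmp q x' = cmp x p -> #|im_precomp W x'| = #|im_precomp W x|.
Proof.
move=> [p' [p'p pp']] [q' [q'q qq']] qx'.
have x'p' : cmp x' p' = cmp q' x.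
  transitivity (cmp (cmp q' (cmp q x')) p'); first by rewrite cmpA q'q cmp1l.
  by rewrite qx' -!cmpA pp' cmp1r.
apply: (@card_in_bij _ _ _ _ (fun v : homT A' W => cmp v p' : homT A W)
                              (fun v : homT A W => cmp v p : homT A' W)).
- by move=> _ /imsetP [u _ ->]; apply/imsetP; exists (cmp u q' : homT B W); rewrite // -!cmpA x'p'.
- by move=> _ /imsetP [u _ ->]; apply/imsetP; exists (cmp u q : homT B' W); rewrite // -!cmpA qx'.
- by move=> v _; rewrite -cmpA p'p cmp1r.
- by move=> v _; rewrite -cmpA pp' cmp1r.
Qed.

Lemma card_im_postcomp_iso W A B A' B' (x : hom A B) (x' : hom A' B')
    (p : hom A' A) (q : hom B' B) :
  is_iso p -> is_iso q -> cmp q x' = cmp x p -> #|im_postcomp W x'| = #|im_postcomp W x|.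
Proof.
move=> [p' [p'p pp']] [q' [q'q qq']] qx'.
have q'x : cmp q' x = cmp x' p'.
  transitivity (cmp q' (cmp (cmp x p) p')); first by rewrite -cmpA pp' cmp1r.
  by rewrite -qx' !cmpA q'q cmp1l.
apply: (@card_in_bij _ _ _ _ (fun v : homT W B' => cmp q v : homT W B)
                              (fun v : homT W B => cmp q' v : homT W B')).
- by move=> _ /imsetP [u _ ->]; apply/imsetP; exists (cmp p u : homT W A); rewrite // !cmpA qx'.
- by move=> _ /imsetP [u _ ->]; apply/imsetP; exists (cmp p' u : homT W A'); rewrite // !cmpA q'x.
- by move=> v _; rewrite cmpA q'q cmp1l.
- by move=> v _; rewrite cmpA qq' cmp1l.
Qed.

Lemma card_hom_isol X X' Y (p : hom X' X) : is_iso p -> card_hom X Y = card_hom X' Y.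
Proof.
move=> [p' [p'p pp']]; rewrite /card_hom -!cardsT.
apply: (@card_in_bij _ _ _ _ (fun v : homT X Y => cmp v p : homT X' Y)
                              (fun v : homT X' Y => cmp v p' : homT X Y)) => //.
- by move=> v _; rewrite -cmpA pp' cmp1r.
- by move=> v _; rewrite -cmpA p'p cmp1r.
Qed.

Lemma card_hom_isor X Y Y' (q : hom Y Y') : is_iso q -> card_hom X Y = card_hom X Y'.
Proof.
move=> [q' [q'q qq']]; rewrite /card_hom -!cardsT.
apply: (@card_in_bij _ _ _ _ (fun v : homT X Y => cmp q v : homT X Y')
                              (fun v : homT X Y' => cmp q' v : homT X Y)) => //.
- by move=> v _; rewrite cmpA q'q cmp1l.
- by move=> v _; rewrite cmpA qq' cmp1l.
Qed.

Lemma card_hom_shift X Y : card_hom (sh X) (sh Y) = card_hom X Y.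
Proof.
have [s sK Ks] := shiftm_bij X Y; rewrite /card_hom -!cardsT.
apply: (@card_in_bij _ _ _ _ (fun v : homT (sh X) (sh Y) => s v : homT X Y)
                              (fun v : homT X Y => shm v : homT (sh X) (sh Y))) => //.
Qed.

Lemma card_hom_shiftn n (X Y : obj C) : card_hom (shiftn n X) (shiftn n Y) = card_hom X Y.
Proof. by elim: n => //= n IHn; rewrite card_hom_shift. Qed.

Variables (t : nat) (Hper : periodic C t) (R : rcfType).
Hypothesis t_odd : odd t.

Lemma shiftn_add m n (X : obj C) : shiftn m (shiftn n X) = shiftn (m + n) X.
Proof. by elim: m => //= m ->. Qed.

Lemma card_hom_shiftn_rev i (X Y : obj C) : (0 < i <= t)%N ->
  card_hom (shiftn i X) Y = card_hom (sh X) (shiftn (t.+1 - i) Y).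
Proof.
case/andP => i_gt0 i_le_t; have [eta [iso_eta _]] := Hper.
rewrite -(card_hom_shiftn (t - i)) shiftn_add subnK // subSn //=.
by rewrite card_hom_shift (card_hom_isol _ (iso_eta X)).
Qed.

Section RotatedTriangles.
Variables (Z M L : obj C) (f : hom Z M) (g : hom M L) (h : hom L (sh Z)).
Hypothesis Dfgh : dist f g h.

(* [fn n], [gn n], [hn n] is the triangle [f, g, h] rotated [3 n] times. *)
Fixpoint fn n : hom (shiftn n Z) (shiftn n M) :=
  if n is n'.+1 then - shm (fn n') else f.
Fixpoint gn n : hom (shiftn n M) (shiftn n L) :=
  if n is n'.+1 then - shm (gn n') else g.
Fixpoint hn n : hom (shiftn n L) (sh (shiftn n Z)) :=
  if n is n'.+1 then - shm (hn n') else h.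

Lemma dist_n n : dist (fn n) (gn n) (hn n).
Proof. by elim: n => //= n /dist_rot/dist_rot/dist_rot. Qed.

Lemma fn_sign n : fn n = (-1) ^+ n *: shiftnm n f.
Proof. by elim: n => [|n /= ->]; rewrite ?scale1r // shiftmZ exprS mulN1r scaleNr. Qed.

Lemma fn_period :
  exists (p : hom (shiftn t.+1 Z) (sh Z)) (q : hom (shiftn t.+1 M) (sh M)),
    [/\ is_iso p, is_iso q & cmp q (fn t.+1) = cmp (fn 1) p].
Proof.
have [eta [iso_eta eta_nat]] := Hper.
exists (shm (eta Z)), (- shm (eta M)).
split; [exact/iso_shiftm | exact/iso_opp/iso_shiftm |].
rewrite /= fn_sign -signr_odd t_odd expr1 scaleN1r shiftmN opprK.
by rewrite !cmpNl -!shiftm_comp eta_nat.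
Qed.

Lemma card_im_precomp_hn_period : #|im_precomp L (hn t)| = #|im_precomp L h|.
Proof.
have [p [q [iso_p iso_q qf]]] := fn_period.
have := card_hom_dist_precomp L (dist_rot (dist_rot (dist_n t))).
rewrite -(card_hom_isol _ iso_p) (card_hom_dist_precomp L (dist_rot (dist_rot (dist_n 0)))).
rewrite (card_im_precomp_iso L iso_p iso_q qf) => /eqP.
by rewrite eqn_pmul2l ?im_precomp_gt0 // => /eqP.
Qed.

Lemma card_im_postcomp_hn_period : #|im_postcomp (sh Z) (hn t)| = #|im_postcomp (sh Z) h|.
Proof.
have [p [q [iso_p iso_q qf]]] := fn_period.
have := card_hom_dist_postcomp (sh Z) (dist_rot (dist_rot (dist_n t))).
rewrite (card_hom_isor _ iso_p).
rewrite (card_hom_dist_postcomp (sh Z) (dist_rot (dist_rot (dist_n 0)))).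
rewrite (card_im_postcomp_iso (sh Z) iso_p iso_q qf) => /eqP.
by rewrite eqn_pmul2r ?im_postcomp_gt0 // => /eqP.
Qed.

Lemma alt_prod_card_hom_gt0 (F : nat -> obj C) (Y : obj C) :
  0 < \prod_(1 <= i < t.+1) ((card_hom (F i) Y)%:R : R) ^ alt i.
Proof. by apply: prodr_gt0 => i _; rewrite exprz_gt0 // ltr0n card_hom_gt0. Qed.

Lemma alt_prod_card_hom_ML :
  \prod_(1 <= i < t.+1) (((card_hom (shiftn i M) L)%:R : R) ^ alt i
                         / ((card_hom (shiftn i L) L)%:R : R) ^ alt i) =
  \prod_(1 <= i < t.+1) ((card_hom (shiftn i Z) L)%:R : R) ^ alt i
    * (#|im_precomp L h|%:R) ^+ 2.
Proof.
pose a i := (#|im_precomp L (fn i)|%:R : R).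
pose b i := (#|im_precomp L (gn i)|%:R : R).
pose c i := (#|im_precomp L (hn i)|%:R : R).
have c_neq0 i : c i != 0 by rewrite pnatr_eq0 -lt0n im_precomp_gt0.
have -> : \prod_(1 <= i < t.+1) ((card_hom (shiftn i Z) L)%:R : R) ^ alt i =
          \prod_(1 <= i < t.+1) (c i.-1 * a i) ^ alt i.
  apply: eq_big_nat => -[//|i] _.
  by rewrite (card_hom_dist_precomp L (dist_rot (dist_rot (dist_n i)))) natrM mulrC.
rewrite prodf_div.
have -> : \prod_(1 <= i < t.+1) ((card_hom (shiftn i M) L)%:R : R) ^ alt i =
          \prod_(1 <= i < t.+1) (a i * b i) ^ alt i.
  by apply: eq_bigr => i _; rewrite (card_hom_dist_precomp L (dist_n i)) natrM mulrC.
have -> : \prod_(1 <= i < t.+1) ((card_hom (shiftn i L) L)%:R : R) ^ alt i =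
          \prod_(1 <= i < t.+1) (b i * c i) ^ alt i.
  by apply: eq_bigr => i _; rewrite (card_hom_dist_precomp L (dist_rot (dist_n i))) natrM mulrC.
rewrite (alt_prod_exact _ _ t_odd c_neq0) /c card_im_precomp_hn_period -mulrA.
rewrite mulrC mulKf ?expr2 //; apply: lt0r_neq0; apply: prodr_gt0 => i _.
by rewrite exprz_gt0 // mulr_gt0 // ltr0n im_precomp_gt0.
Qed.

Lemma alt_prod_card_hom_rev (Y : obj C) :
  \prod_(1 <= i < t.+1) ((card_hom (shiftn i Z) Y)%:R : R) ^ alt i =
  \prod_(1 <= i < t.+1) ((card_hom (sh Z) (shiftn i Y))%:R : R) ^ alt i.
Proof.
rewrite -(alt_prod_rev (fun j => (card_hom (sh Z) (shiftn j Y))%:R) t_odd).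
by apply: eq_big_nat => i /andP [i_gt0 i_lt]; rewrite card_hom_shiftn_rev // i_gt0 -ltnS.
Qed.

Lemma alt_prod_card_hom_ZM :
  \prod_(1 <= i < t.+1) (((card_hom (shiftn i Z) M)%:R : R) ^ alt i
                         / ((card_hom (shiftn i Z) Z)%:R : R) ^ alt i) =
  \prod_(1 <= i < t.+1) ((card_hom (shiftn i Z) L)%:R : R) ^ alt i
    * (#|im_postcomp (sh Z) h|%:R) ^+ 2.
Proof.
pose a i := (#|im_postcomp (sh Z) (fn i)|%:R : R).
pose b i := (#|im_postcomp (sh Z) (gn i)|%:R : R).
pose c i := (#|im_postcomp (sh Z) (hn i)|%:R : R).
have c_neq0 i : c i != 0 by rewrite pnatr_eq0 -lt0n im_postcomp_gt0.
rewrite prodf_div !alt_prod_card_hom_rev.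
have -> : \prod_(1 <= i < t.+1) ((card_hom (sh Z) (shiftn i M))%:R : R) ^ alt i =
          \prod_(1 <= i < t.+1) (a i * b i) ^ alt i.
  by apply: eq_bigr => i _; rewrite (card_hom_dist_postcomp (sh Z) (dist_n i)) natrM.
have -> : \prod_(1 <= i < t.+1) ((card_hom (sh Z) (shiftn i L))%:R : R) ^ alt i =
          \prod_(1 <= i < t.+1) (b i * c i) ^ alt i.
  by apply: eq_bigr => i _; rewrite (card_hom_dist_postcomp (sh Z) (dist_rot (dist_n i))) natrM.
have -> : \prod_(1 <= i < t.+1) ((card_hom (sh Z) (shiftn i Z))%:R : R) ^ alt i =
          \prod_(1 <= i < t.+1) (c i.-1 * a i) ^ alt i.
  apply: eq_big_nat => -[//|i] _.
  by rewrite (card_hom_dist_postcomp (sh Z) (dist_rot (dist_rot (dist_n i)))) natrM.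
rewrite (alt_prod_exact _ _ t_odd c_neq0) /c card_im_postcomp_hn_period.
rewrite mulrAC mulfK ?expr2 //; apply: lt0r_neq0; apply: prodr_gt0 => i _.
by rewrite exprz_gt0 // mulr_gt0 // ltr0n im_postcomp_gt0.
Qed.

Lemma annihilator_sqrt_identity :
  #|annihilator g h|%:R *
    Num.sqrt (\prod_(1 <= i < t.+1) (((card_hom (shiftn i Z) M)%:R : R) ^ alt i
                                     / ((card_hom (shiftn i Z) Z)%:R : R) ^ alt i)) =
  #|annihilator h (- shm f)|%:R *
    Num.sqrt (\prod_(1 <= i < t.+1) (((card_hom (shiftn i M) L)%:R : R) ^ alt i
                                     / ((card_hom (shiftn i L) L)%:R : R) ^ alt i)).
Proof.
rewrite alt_prod_card_hom_ML alt_prod_card_hom_ZM.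
set Q := \prod_(1 <= i < t.+1) _.
have Q_ge0 : 0 <= Q by apply/ltW/alt_prod_card_hom_gt0.
rewrite !(sqrtrM _ Q_ge0) !sqrtr_sqr !normr_nat.
have := congr1 (GRing.natmul (1 : R)) (card_annihilator_precomp Dfgh).
have := congr1 (GRing.natmul (1 : R)) (card_annihilator_postcomp Dfgh).
rewrite !natrM => Ehf Egh.
have hom_neq0 : (card_hom (sh Z) L)%:R != 0 :> R.
  by rewrite pnatr_eq0 -lt0n card_hom_gt0.
apply: (mulIf hom_neq0).
transitivity (#|sandwich h|%:R * #|im_precomp L h|%:R *
              (Num.sqrt Q * #|im_postcomp (sh Z) h|%:R) : R).
  by rewrite -Egh; ring.
transitivity (#|annihilator h (- shm f)|%:R * (card_hom (sh Z) L)%:R *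
              (Num.sqrt Q * #|im_precomp L h|%:R) : R).
  by rewrite Ehf; ring.
by ring.
Qed.

End RotatedTriangles.

Lemma card_aut_gt0 (X : obj C) : (0 < #|aut_set X|)%N.
Proof. by apply/card_gt0P; exists (idm X); rewrite inE; apply/asboolP/iso_id. Qed.

Lemma card_cone_aut_identity (Z M L : obj C) :
  (#|cone_set Z M L| * #|aut_set L|)%:R *
    Num.sqrt (\prod_(1 <= i < t.+1) (((card_hom (shiftn i Z) M)%:R : R) ^ alt i
                                     / ((card_hom (shiftn i Z) Z)%:R : R) ^ alt i)) =
  (#|cone_set M L (sh Z)| * #|aut_set Z|)%:R *
    Num.sqrt (\prod_(1 <= i < t.+1) (((card_hom (shiftn i M) L)%:R : R) ^ alt i
                                     / ((card_hom (shiftn i L) L)%:R : R) ^ alt i)).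
Proof.
rewrite -(card_aut_shift Z) -sum_annihilator_dist -sum_annihilator_dist_rot.
rewrite !natr_sum !mulr_suml; apply: eq_bigr => x /asboolP.
exact: annihilator_sqrt_identity.
Qed.

End Triangulated.

Theorem corollary2p3 (k : finFieldType) (C : preTri k) (t : nat)
  (HC : periodic_tricat C t) (t_gt1 : (1 < t)%N) (t_odd : odd t)
  (R : rcfType) (Z L M : obj C) :
  (#|cone_set M L (shift C Z)|%:R / #|aut_set L|%:R : R) *
    Num.sqrt (\prod_(1 <= i < t.+1)
        (((card_hom (shiftn i M) L)%:R : R) ^ ((-1) ^+ i : int)
          / ((card_hom (shiftn i L) L)%:R : R) ^ ((-1) ^+ i : int)))
  =
  (#|cone_set Z M L|%:R / #|aut_set Z|%:R : R) *
    Num.sqrt (\prod_(1 <= i < t.+1)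
        (((card_hom (shiftn i Z) M)%:R : R) ^ ((-1) ^+ i : int)
          / ((card_hom (shiftn i Z) Z)%:R : R) ^ ((-1) ^+ i : int))).
Proof.
(* Only the parity of [t] matters. *)
case: HC => [[Hcat Hadd] Hshift [HTR1 HTR2] [HTR3 _] [_ Hper]].
have := card_cone_aut_identity Hcat Hadd Hshift HTR1 HTR2 HTR3 Hper R t_odd Z M L.
have aut_neq0 (X : obj C) : (#|aut_set X|%:R : R) != 0.
  by rewrite pnatr_eq0 -lt0n (card_aut_gt0 Hcat).
rewrite !natrM; set sZM := Num.sqrt _; set sML := Num.sqrt _ => E.
apply: (mulIf (mulf_neq0 (aut_neq0 L) (aut_neq0 Z))).
transitivity (#|cone_set M L (shift C Z)|%:R * #|aut_set Z|%:R * sML : R).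
  by field; rewrite aut_neq0.
by rewrite -E; field; rewrite aut_neq0.
Qed.
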